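(* For real numbers $a<b$, the structure $([a,b],\oplus,a,b)$, where $x\oplus y=\tfrac{x+y}{2}$, is an interval object in the category of sets: it is an m-convex body, and for every m-convex body $(A,m)$ in sets and all $x,y\in A$ there is a unique midpoint homomorphism $h\colon[a,b]\to A$ with $h(a)=x$ and $h(b)=y$.
   Context: A midpoint set is a set $A$ with $m\colon A\times A\to A$ satisfying $m(x,x)=x$, $m(x,y)=m(y,x)$, $m(m(x,y),m(z,w))=m(m(x,z),m(y,w))$. It is cancellative if $m(x,y)=m(x,z)$ implies $y=z$, and iterative if for every set $X$ and functions $h\colon X\to A$, $t\colon X\to X$ there is a unique $u\colon X\to A$ with $u(x)=m(h(x),u(t(x)))$. An m-convex body is a cancellative iterative midpoint set; a midpoint homomorphism is a function preserving the midpoint operation. *)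

From Stdlib Require Import Reals.
Open Scope R_scope.

Definition midpoint_set {A : Type} (m : A -> A -> A) : Prop :=
  (forall x, m x x = x) /\
  (forall x y, m x y = m y x) /\
  (forall x y z w, m (m x y) (m z w) = m (m x z) (m y w)).

Definition cancellative {A : Type} (m : A -> A -> A) : Prop :=
  forall x y z, m x y = m x z -> y = z.

Definition iterative {A : Type} (m : A -> A -> A) : Prop :=
  forall (X : Type) (h : X -> A) (t : X -> X),
    exists u : X -> A,
      (forall x, u x = m (h x) (u (t x))) /\
      (forall v : X -> A, (forall x, v x = m (h x) (v (t x))) ->
                          forall x, v x = u x).

Definition m_convex_body {A : Type} (m : A -> A -> A) : Prop :=
  midpoint_set m /\ cancellative m /\ iterative m.

Definition midpoint_hom {A B : Type} (mA : A -> A -> A) (mB : B -> B -> B)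
  (f : A -> B) : Prop :=
  forall x y, f (mA x y) = mB (f x) (f y).

Definition Icc (a b : R) : Type := { x : R | a <= x <= b }.

Lemma Icc_mid_ok (a b x y : R) :
  a <= x <= b -> a <= y <= b -> a <= (x + y) / 2 <= b.
Proof.
  intros [] []; split; unfold Rdiv;
  apply Rmult_le_reg_r with 2; try (apply Rlt_0_2);
  rewrite Rmult_assoc, Rinv_l, Rmult_1_r by (apply not_0_IZR; discriminate);
  replace (a * 2) with (a + a) by ring; replace (b * 2) with (b + b) by ring;
  apply Rplus_le_compat; assumption.
Qed.

Definition Icc_mid (a b : R) (x y : Icc a b) : Icc a b :=
  exist _ ((proj1_sig x + proj1_sig y) / 2)
        (Icc_mid_ok a b _ _ (proj2_sig x) (proj2_sig y)).

Definition Icc_a (a b : R) (hab : a < b) : Icc a b :=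
  exist _ a (conj (Rle_refl a) (Rlt_le a b hab)).
Definition Icc_b (a b : R) (hab : a < b) : Icc a b :=
  exist _ b (conj (Rlt_le a b hab) (Rle_refl b)).

(* The equation u x = (h x + u (t x)) / 2 is a contraction of ratio 1/2 for
   the sup distance on functions X -> [a,b], so it has exactly one solution,
   the limit of the iterates starting from the constant a: [a,b] is iterative.

   For the universal property, write every s in [a,b] as s = e(s) (+) D(s),
   where e(s) is the endpoint on the side of s and D is the doubling map.
   A homomorphism g with g a = x and g b = y then satisfies
   g s = m (x or y) (g (D s)), and iterativity of A says that this equation
   has exactly one solution u.  That u is a homomorphism follows from
   iterativity once more, applied on pairs (p, q) with the doubling map in
   both coordinates and the medial law. *)

From Stdlib Require Import Reals Lra ProofIrrelevance.
Open Scope R_scope.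

Lemma Rabs_le_bounds (z c : R) : Rabs z <= c -> - c <= z <= c.
Proof. unfold Rabs; destruct Rcase_abs; lra. Qed.

Lemma Rdiv_pow2_S (c : R) (n : nat) : c / 2 ^ S n = c / 2 ^ n / 2.
Proof. simpl; pose proof (pow_lt 2 n ltac:(lra)); field; lra. Qed.

Lemma exists_div_pow2_lt (c e : R) : 0 < e -> exists N, c / 2 ^ N < e.
Proof.
  intros e_pos; destruct (Rle_or_lt c 0) as [c_le | c_pos].
  - exists O; simpl; lra.
  - destruct (pow_lt_1_zero (/ 2) ltac:(rewrite Rabs_pos_eq; lra) (e / c))
      as [N HN]; [apply Rdiv_lt_0_compat; lra |].
    exists N; specialize (HN N (le_n N)).
    rewrite Rabs_pos_eq, pow_inv in HN by (apply pow_le; lra).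
    apply (Rmult_lt_compat_l c) in HN; [| lra].
    replace (c * (e / c)) with e in HN by (field; lra).
    exact HN.
Qed.

Lemma Rle_0_of_le_div_pow2 (d c : R) : (forall n, d <= c / 2 ^ n) -> d <= 0.
Proof.
  intros Hd; apply Rnot_lt_le; intros d_pos.
  destruct (exists_div_pow2_lt c d d_pos) as [N HN].
  specialize (Hd N); lra.
Qed.

Lemma Rabs_le_div_pow2_eq0 (d c : R) : (forall n, Rabs d <= c / 2 ^ n) -> d = 0.
Proof.
  intros Hd.
  assert (d <= 0 /\ - d <= 0); [| lra].
  split; apply (Rle_0_of_le_div_pow2 _ c); intro n;
    pose proof (Rabs_le_bounds _ _ (Hd n)); lra.
Qed.

Lemma Un_cv_dist_le (U : nat -> R) (l c : R) (n : nat) :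
  Un_cv U l -> (forall k, Rabs (U (n + k)%nat - U n) <= c) -> Rabs (U n - l) <= c.
Proof.
  intros U_cv U_close; apply Rnot_lt_le; intros far.
  destruct (U_cv (Rabs (U n - l) - c)) as [N HN]; [lra |].
  specialize (HN (n + N)%nat ltac:(apply Nat.le_add_l)); specialize (U_close N).
  unfold Rdist in HN.
  pose proof (Rabs_triang (U n - U (n + N)%nat) (U (n + N)%nat - l)) as tri.
  replace (U n - U (n + N)%nat + (U (n + N)%nat - l)) with (U n - l) in tri by ring.
  rewrite (Rabs_minus_sym (U n) (U (n + N)%nat)) in tri; lra.
Qed.

Section HalfAverage.

Variables (X : Type) (a b : R) (h : X -> R) (t : X -> X).

Lemma half_average_unique (u v : X -> R) :
  (forall x, a <= u x <= b) -> (forall x, a <= v x <= b) ->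
  (forall x, u x = (h x + u (t x)) / 2) -> (forall x, v x = (h x + v (t x)) / 2) ->
  forall x, u x = v x.
Proof.
  intros u_range v_range u_eq v_eq x.
  enough (forall n x, Rabs (u x - v x) <= (b - a) / 2 ^ n)
    by (apply Rminus_diag_uniq, (Rabs_le_div_pow2_eq0 _ (b - a)); auto).
  intro n; induction n as [| n IH]; intro y; apply Rabs_le.
  - specialize (u_range y); specialize (v_range y); simpl; lra.
  - rewrite Rdiv_pow2_S, (u_eq y), (v_eq y).
    pose proof (Rabs_le_bounds _ _ (IH (t y))); lra.
Qed.

Hypothesis h_range : forall x, a <= h x <= b.

Fixpoint half_average_approx (n : nat) (x : X) : R :=
  match n with
  | O => a
  | S n => (h x + half_average_approx n (t x)) / 2
  end.

Lemma half_average_approx_range (n : nat) (x : X) :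
  a <= half_average_approx n x <= b.
Proof.
  revert x; induction n as [| n IH]; intro x; simpl.
  - specialize (h_range x); lra.
  - specialize (h_range x); specialize (IH (t x)); lra.
Qed.

Lemma half_average_approx_shift (n k : nat) (x : X) :
  Rabs (half_average_approx (n + k) x - half_average_approx n x) <= (b - a) / 2 ^ n.
Proof.
  revert x; induction n as [| n IH]; intro x; apply Rabs_le.
  - pose proof (half_average_approx_range k x); simpl; lra.
  - rewrite Rdiv_pow2_S; simpl.
    pose proof (Rabs_le_bounds _ _ (IH (t x))); lra.
Qed.

Lemma half_average_approx_Cauchy (x : X) :
  Cauchy_crit (fun n => half_average_approx n x).
Proof.
  intros eps eps_pos.
  destruct (exists_div_pow2_lt (b - a) (eps / 2)) as [N HN]; [lra |].
  exists N; intros n m Hn Hm; unfold Rdist.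
  pose proof (half_average_approx_shift N (n - N) x) as Hn'.
  pose proof (half_average_approx_shift N (m - N) x) as Hm'.
  rewrite Nat.add_comm, Nat.sub_add in Hn', Hm' by assumption.
  apply Rabs_le_bounds in Hn', Hm'.
  apply Rabs_def1; lra.
Qed.

Definition half_average_limit (x : X) : R :=
  proj1_sig (R_complete _ (half_average_approx_Cauchy x)).

Lemma half_average_approx_dist (n : nat) (x : X) :
  Rabs (half_average_approx n x - half_average_limit x) <= (b - a) / 2 ^ n.
Proof.
  apply (Un_cv_dist_le (fun n => half_average_approx n x)).
  - exact (proj2_sig (R_complete _ (half_average_approx_Cauchy x))).
  - intro k; apply half_average_approx_shift.
Qed.

Lemma half_average_limit_range (x : X) : a <= half_average_limit x <= b.
Proof.
  split; apply Rminus_le, (Rle_0_of_le_div_pow2 _ (b - a)); intro n;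
    pose proof (half_average_approx_range n x);
    pose proof (Rabs_le_bounds _ _ (half_average_approx_dist n x)); lra.
Qed.

Lemma half_average_limit_eq (x : X) :
  half_average_limit x = (h x + half_average_limit (t x)) / 2.
Proof.
  apply Rminus_diag_uniq, (Rabs_le_div_pow2_eq0 _ (b - a)); intro n; apply Rabs_le.
  pose proof (Rabs_le_bounds _ _ (half_average_approx_dist (S n) x)) as Hx.
  pose proof (Rabs_le_bounds _ _ (half_average_approx_dist n (t x))).
  rewrite Rdiv_pow2_S in Hx; simpl in Hx; lra.
Qed.

End HalfAverage.

Lemma Icc_eq (a b : R) (p q : Icc a b) : proj1_sig p = proj1_sig q -> p = q.
Proof. destruct p, q; simpl; intros ->; f_equal; apply proof_irrelevance. Qed.

Lemma Icc_mid_idem (a b : R) (p : Icc a b) : Icc_mid a b p p = p.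
Proof. apply Icc_eq; simpl; lra. Qed.

Lemma Icc_mid_comm (a b : R) (p q : Icc a b) : Icc_mid a b p q = Icc_mid a b q p.
Proof. apply Icc_eq; simpl; lra. Qed.

Lemma Icc_mid_medial (a b : R) (p q r s : Icc a b) :
  Icc_mid a b (Icc_mid a b p q) (Icc_mid a b r s) =
  Icc_mid a b (Icc_mid a b p r) (Icc_mid a b q s).
Proof. apply Icc_eq; simpl; lra. Qed.

Lemma Icc_mid_cancellative (a b : R) : cancellative (Icc_mid a b).
Proof.
  intros p q r E; apply Icc_eq.
  apply (f_equal (@proj1_sig _ _)) in E; simpl in E; lra.
Qed.

Lemma Icc_mid_iterative (a b : R) : iterative (Icc_mid a b).
Proof.
  intros X h t.
  set (hr := fun x => proj1_sig (h x)).
  assert (hr_range : forall x, a <= hr x <= b) by (intro x; exact (proj2_sig (h x))).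
  exists (fun x => exist (fun r => a <= r <= b) _
                          (half_average_limit_range X a b hr t hr_range x)); split.
  - intro x; apply Icc_eq; apply half_average_limit_eq.
  - intros v v_eq x; apply Icc_eq; simpl.
    apply (half_average_unique X a b hr t (fun x => proj1_sig (v x))).
    + intro y; exact (proj2_sig (v y)).
    + apply half_average_limit_range.
    + intro y; exact (f_equal (@proj1_sig _ _) (v_eq y)).
    + apply half_average_limit_eq.
Qed.

Lemma Icc_mid_m_convex_body (a b : R) : m_convex_body (Icc_mid a b).
Proof.
  split; [| split; [apply Icc_mid_cancellative | apply Icc_mid_iterative]].
  split; [| split]; intros; [apply Icc_mid_idem | apply Icc_mid_comm | apply Icc_mid_medial].
Qed.

Section MidpointIterative.

Variables (A : Type) (m : A -> A -> A).
Hypothesis m_idem : forall x, m x x = x.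
Hypothesis m_iter : iterative m.

Lemma iterative_unique (X : Type) (h : X -> A) (t : X -> X) (F G : X -> A) :
  (forall x, F x = m (h x) (F (t x))) -> (forall x, G x = m (h x) (G (t x))) ->
  forall x, F x = G x.
Proof.
  intros F_eq G_eq x; destruct (m_iter X h t) as [u [_ u_unique]].
  rewrite (u_unique F F_eq x), (u_unique G G_eq x); reflexivity.
Qed.

Lemma midpoint_fixpoint (z w : A) : m z w = w -> w = z.
Proof.
  intro E; apply (iterative_unique unit (fun _ => z) (fun v => v) (fun _ => w) (fun _ => z));
    [intros _; symmetry; assumption | intros _; symmetry; apply m_idem | exact tt].
Qed.

End MidpointIterative.

Definition Icc_digit {A : Type} (a b : R) (x y : A) (s : Icc a b) : A :=
  if Rle_dec (proj1_sig s) ((a + b) / 2) then x else y.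

Lemma Icc_digit_map {A B : Type} (f : A -> B) (a b : R) (x y : A) (s : Icc a b) :
  f (Icc_digit a b x y s) = Icc_digit a b (f x) (f y) s.
Proof. unfold Icc_digit; destruct Rle_dec; reflexivity. Qed.

Lemma Icc_double_range (a b r : R) : a <= r <= b ->
  a <= (if Rle_dec r ((a + b) / 2) then 2 * r - a else 2 * r - b) <= b.
Proof. destruct Rle_dec; lra. Qed.

Definition Icc_double (a b : R) (s : Icc a b) : Icc a b :=
  exist _ _ (Icc_double_range a b _ (proj2_sig s)).

Section DyadicExpansion.

Variables (a b : R) (hab : a < b).
Notation lo := (Icc_a a b hab).
Notation hi := (Icc_b a b hab).
Notation mid := (Icc_mid a b).

Lemma Icc_mid_digit_double (s : Icc a b) :
  mid (Icc_digit a b lo hi s) (Icc_double a b s) = s.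
Proof. apply Icc_eq; unfold Icc_digit; simpl; destruct Rle_dec; simpl; lra. Qed.

Lemma Icc_mid_split (p q : Icc a b) :
  mid p q = mid (mid (Icc_digit a b lo hi p) (Icc_digit a b lo hi q))
                (mid (Icc_double a b p) (Icc_double a b q)).
Proof. rewrite <- Icc_mid_medial, !Icc_mid_digit_double; reflexivity. Qed.

Lemma Icc_digit_mid_a {A : Type} (x y : A) (w : Icc a b) :
  Icc_digit a b x y (mid lo w) = x.
Proof.
  destruct w as [r Hr]; unfold Icc_digit; simpl; destruct Rle_dec; [reflexivity | lra].
Qed.

Lemma Icc_double_mid_a (w : Icc a b) : Icc_double a b (mid lo w) = w.
Proof. destruct w as [r Hr]; apply Icc_eq; simpl; destruct Rle_dec; lra. Qed.

Lemma Icc_digit_mid_b {A : Type} (x y : A) (w : Icc a b) :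
  a < proj1_sig w -> Icc_digit a b x y (mid hi w) = y.
Proof.
  destruct w as [r Hr]; unfold Icc_digit; simpl; destruct Rle_dec; [lra | reflexivity].
Qed.

Lemma Icc_double_mid_b (w : Icc a b) :
  a < proj1_sig w -> Icc_double a b (mid hi w) = w.
Proof. destruct w as [r Hr]; simpl; intro; apply Icc_eq; simpl; destruct Rle_dec; lra. Qed.

Variables (A : Type) (m : A -> A -> A).
Hypothesis m_idem : forall x, m x x = x.
Hypothesis m_comm : forall x y, m x y = m y x.
Hypothesis m_medial : forall x y z w, m (m x y) (m z w) = m (m x z) (m y w).
Hypothesis m_iter : iterative m.

Variables (x y : A) (u : Icc a b -> A).
Hypothesis u_eq : forall s, u s = m (Icc_digit a b x y s) (u (Icc_double a b s)).

Lemma expansion_mid_a (w : Icc a b) : u (mid lo w) = m x (u w).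
Proof. rewrite u_eq, Icc_digit_mid_a, Icc_double_mid_a; reflexivity. Qed.

Lemma expansion_a : u lo = x.
Proof.
  apply (midpoint_fixpoint A m m_idem m_iter).
  rewrite <- expansion_mid_a, Icc_mid_idem; reflexivity.
Qed.

Lemma expansion_mid_b_gt (w : Icc a b) : a < proj1_sig w -> u (mid hi w) = m y (u w).
Proof. intro; rewrite u_eq, Icc_digit_mid_b, Icc_double_mid_b by assumption; reflexivity. Qed.

Lemma expansion_b : u hi = y.
Proof.
  apply (midpoint_fixpoint A m m_idem m_iter).
  rewrite <- expansion_mid_b_gt, Icc_mid_idem by exact hab; reflexivity.
Qed.

Lemma expansion_mid_b (w : Icc a b) : u (mid hi w) = m y (u w).
Proof.
  destruct (Rle_lt_or_eq_dec a (proj1_sig w)) as [w_gt | w_eq];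
    [exact (proj1 (proj2_sig w)) | apply expansion_mid_b_gt; exact w_gt |].
  replace w with lo by (apply Icc_eq; exact w_eq).
  rewrite Icc_mid_comm, expansion_mid_a, expansion_a, expansion_b; apply m_comm.
Qed.

Lemma expansion_mid_center (w : Icc a b) : u (mid (mid lo hi) w) = m (m x y) (u w).
Proof.
  rewrite <- (Icc_mid_digit_double w); set (d := Icc_double a b w).
  unfold Icc_digit; destruct Rle_dec.
  - rewrite Icc_mid_medial, Icc_mid_idem, expansion_mid_a, expansion_mid_b, expansion_mid_a.
    rewrite (m_medial x y x), m_idem; reflexivity.
  - rewrite (Icc_mid_comm a b lo hi), Icc_mid_medial, Icc_mid_idem.
    rewrite expansion_mid_b, expansion_mid_a, expansion_mid_b.
    rewrite (m_comm x y), (m_medial y x y), m_idem; reflexivity.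
Qed.

Lemma expansion_mid_digits (p q w : Icc a b) :
  u (mid (mid (Icc_digit a b lo hi p) (Icc_digit a b lo hi q)) w) =
  m (m (Icc_digit a b x y p) (Icc_digit a b x y q)) (u w).
Proof.
  unfold Icc_digit; destruct Rle_dec, Rle_dec.
  - rewrite Icc_mid_idem, m_idem; apply expansion_mid_a.
  - apply expansion_mid_center.
  - rewrite (Icc_mid_comm a b hi lo), (m_comm y x); apply expansion_mid_center.
  - rewrite Icc_mid_idem, m_idem; apply expansion_mid_b.
Qed.

Lemma expansion_midpoint_hom : midpoint_hom (Icc_mid a b) m u.
Proof.
  intros p q.
  refine (iterative_unique A m m_iter (Icc a b * Icc a b)
           (fun pq => m (Icc_digit a b x y (fst pq)) (Icc_digit a b x y (snd pq)))
           (fun pq => (Icc_double a b (fst pq), Icc_double a b (snd pq)))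
           (fun pq => u (mid (fst pq) (snd pq)))
           (fun pq => m (u (fst pq)) (u (snd pq))) _ _ (p, q));
    intros [p' q']; simpl.
  - rewrite Icc_mid_split; apply expansion_mid_digits.
  - rewrite (u_eq p'), (u_eq q'); apply m_medial.
Qed.

Lemma midpoint_hom_eq_expansion (g : Icc a b -> A) :
  midpoint_hom (Icc_mid a b) m g -> g lo = x -> g hi = y -> forall s, g s = u s.
Proof.
  intros g_hom g_a g_b.
  apply (iterative_unique A m m_iter _ (Icc_digit a b x y) (Icc_double a b)); [| exact u_eq].
  intro s; rewrite <- (Icc_mid_digit_double s) at 1.
  rewrite g_hom, Icc_digit_map, g_a, g_b; reflexivity.
Qed.

End DyadicExpansion.

Theorem mainTheorem15 (a b : R) (hab : a < b) :
  m_convex_body (Icc_mid a b) /\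
  (forall (A : Type) (m : A -> A -> A), m_convex_body m ->
     forall x y : A,
       exists h : Icc a b -> A,
         (midpoint_hom (Icc_mid a b) m h /\ h (Icc_a a b hab) = x /\ h (Icc_b a b hab) = y) /\
         (forall g : Icc a b -> A,
            midpoint_hom (Icc_mid a b) m g -> g (Icc_a a b hab) = x -> g (Icc_b a b hab) = y ->
            forall t, g t = h t)).
Proof.
  split; [apply Icc_mid_m_convex_body |].
  intros A m [[m_idem [m_comm m_medial]] [_ m_iter]] x y.
  destruct (m_iter (Icc a b) (Icc_digit a b x y) (Icc_double a b)) as [u [u_eq _]].
  exists u; repeat split.
  - exact (expansion_midpoint_hom a b hab A m m_idem m_comm m_medial m_iter x y u u_eq).
  - exact (expansion_a a b hab A m m_idem m_iter x y u u_eq).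
  - exact (expansion_b a b hab A m m_idem m_iter x y u u_eq).
  - exact (midpoint_hom_eq_expansion a b hab A m m_iter x y u u_eq).
Qed.
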